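(* Let $K$ be a real field, let $R:=\prod_{x\in K}K$ (componentwise operations), regard $K\subseteq R$ via constant functions, and let $E(R)$ be the set of idempotents of $R$. Let $$A:=\Big\{\sum_{i=1}^n e_ix_i: n\in\mathbb N,\ e_i\in E(R),\ x_i\in K\Big\}.$$ Then $A$ is a von Neumann regular Baer ring, $A$ is a proper subring of $R$, and $R$ is the complete ring of quotients of $A$. In particular $A$ is a Baer von Neumann regular ring that is not rationally complete.
   Context: A ring is von Neumann regular if for every $a$ there is $b$ with $a^2b=a$. A commutative ring is Baer if every annihilator ideal is generated by an idempotent. A real field is a field in which $-1$ is not a sum of squares. The complete ring of quotients $Q(A)$ of a commutative ring $A$ is its maximal rational extension; $A$ is rationally complete if $A=Q(A)$. *)

From HB Require Import structures.
From mathcomp Require Import all_boot all_order all_algebra.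
Set Implicit Arguments. Unset Strict Implicit. Unset Printing Implicit Defensive.
Import Order.TTheory GRing.Theory Num.Theory.
Local Open Scope ring_scope.

Definition real_field (K : fieldType) : Prop :=
  forall s : seq K, \sum_(x <- s) x ^+ 2 <> -1.

Section FunRing.
Variable K : fieldType.
Definition RK := K -> K.
Definition fadd (f g : RK) : RK := fun t => f t + g t.
Definition fopp (f : RK) : RK := fun t => - f t.
Definition fmul (f g : RK) : RK := fun t => f t * g t.
Definition fcst (c : K) : RK := fun _ => c.
Definition fzero : RK := fcst 0.
Definition fone : RK := fcst 1.

Definition fidem (e : RK) : Prop := fmul e e = e.

Definition Aset (a : RK) : Prop :=
  exists s : seq (RK * K),
    (forall i, (i < size s)%N -> fidem (nth (fzero, 0) s i).1) /\
    a = (fun t => \sum_(p <- s) p.1 t * p.2).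

Definition subring (P : RK -> Prop) : Prop :=
  P fzero /\ P fone /\
  (forall a b, P a -> P b -> P (fadd a b)) /\
  (forall a, P a -> P (fopp a)) /\
  (forall a b, P a -> P b -> P (fmul a b)).

Definition vN_regular (P : RK -> Prop) : Prop :=
  forall a, P a -> exists b, P b /\ fmul (fmul a a) b = a.

Definition baer (P : RK -> Prop) : Prop :=
  forall X : RK -> Prop, (forall x, X x -> P x) ->
  exists e, P e /\ fidem e /\
    forall a, P a ->
      ((forall x, X x -> fmul a x = fzero) <-> exists b, P b /\ a = fmul e b).

Definition rational_in_R (P : RK -> Prop) : Prop :=
  forall r s : RK, s <> fzero -> exists a, P a /\ P (fmul r a) /\ fmul s a <> fzero.

(* An abstract commutative ring S together with an embedding j of the
   subring P into S (j is only constrained on P) is a ring extension of P. *)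
Definition ring_ext_of (P : RK -> Prop) (S : comNzRingType) (j : RK -> S) : Prop :=
  j fone = 1 /\
  (forall a b, P a -> P b -> j (fadd a b) = j a + j b) /\
  (forall a b, P a -> P b -> j (fmul a b) = j a * j b) /\
  (forall a b, P a -> P b -> j a = j b -> a = b).

Definition rational_ext_of (P : RK -> Prop) (S : comNzRingType) (j : RK -> S) : Prop :=
  ring_ext_of P j /\
  forall r s : S, s != 0 ->
    exists a, P a /\ (exists b, P b /\ r * j a = j b) /\ s * j a != 0.

Definition R_is_Q (P : RK -> Prop) : Prop :=
  rational_in_R P /\
  forall (S : comNzRingType) (j : RK -> S), rational_ext_of P j ->
    exists g : S -> RK,
      g 1 = fone /\
      (forall x y, g (x + y) = fadd (g x) (g y)) /\
      (forall x y, g (x * y) = fmul (g x) (g y)) /\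
      injective g /\
      (forall a, P a -> g (j a) = a).

Definition rationally_complete (P : RK -> Prop) : Prop :=
  forall (S : comNzRingType) (j : RK -> S), rational_ext_of P j ->
    forall y : S, exists a, P a /\ j a = y.
End FunRing.

From HB Require Import structures.
From mathcomp Require Import all_boot all_algebra.
From mathcomp Require Import boolp functions.
Set Implicit Arguments. Unset Strict Implicit. Unset Printing Implicit Defensive.
Import GRing.Theory.
Local Open Scope ring_scope.

(* An idempotent of R = K^K is a {0,1}-valued function, so every element of
   A takes finitely many values; conversely a function with values in a
   finite list L is the sum over v in L of (indicator of its v-fibre) * v.
   Hence A is exactly the ring of finitely-valued functions K -> K, and all
   ring-theoretic claims are checked pointwise on that description:
   - closure under the ring operations and under pointwise inversion
     (0^-1 = 0) gives that A is a von Neumann regular subring;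
   - for X inside A, the indicator e of the common zero set of X lies in A
     and generates its annihilator, so A is Baer;
   - the point masses delta_t * c lie in A and satisfy r * delta_t =
     delta_t * r(t); this makes R a rational extension of A, and lets any
     rational extension (S, j) of A be mapped into R by y |-> (t |-> c)
     where y * j(delta_t) = j(delta_t * c);
   - a real field has characteristic 0, so the identity K -> K takes
     infinitely many values: it lies in R but not in A, so R is a proper
     rational extension and A is not rationally complete. *)

HB.instance Definition _ (K : fieldType) :=
  GRing.ComPzRing.copy (RK K) (K -> K).

Lemma RK_oner_neq0 (K : fieldType) : (1 : RK K) != 0.
Proof. by apply/eqP => /(congr1 (fun f => f 0)) /eqP; rewrite oner_eq0. Qed.

HB.instance Definition _ (K : fieldType) :=
  GRing.PzSemiRing_isNonZero.Build (RK K) (@RK_oner_neq0 K).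

Section FinitelyValued.
Variable K : fieldType.
Implicit Types (a b : RK K) (t c : K).

Definition finval a := exists L : seq K, forall t, a t \in L.

Lemma idem_field_01 (x : K) : x * x = x -> x = 0 \/ x = 1.
Proof.
move=> xx; have : x * (x - 1) = 0 by rewrite mulrBr mulr1 xx subrr.
by move/eqP; rewrite mulf_eq0 subr_eq0 => /orP [] /eqP; [left|right].
Qed.

(* A finite combination of idempotents with coefficients in K is finitely
   valued: each idempotent is {0,1}-valued. *)
Lemma Aset_finval a : Aset a -> finval a.
Proof.
case=> s [idem_s ->]; elim: s idem_s => [|p s IH] idem_s.
  by exists [:: 0] => t; rewrite big_nil inE.
have [|L HL] := IH; first by move=> i; exact: (idem_s i.+1).
exists (L ++ [seq p.2 + v | v <- L]) => t; rewrite big_cons mem_cat.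
have /(congr1 (fun f => f t)) := idem_s 0%N isT.
case/idem_field_01 => /= ->; first by rewrite mul0r add0r HL.
by rewrite mul1r map_f ?orbT.
Qed.

Definition fibre a (v : K) : RK K := fun t => if a t == v then 1 else 0.

Lemma fibre_idem a v : fidem (fibre a v).
Proof.
by apply: funext => t; rewrite /fmul /fibre; case: ifP; rewrite ?mulr1 ?mulr0.
Qed.

(* A function with values in L is the sum of its fibres weighted by L. *)
Lemma finval_Aset a : finval a -> Aset a.
Proof.
case=> L HL; exists [seq (fibre a v, v) | v <- undup L]; split.
  by move=> i; rewrite size_map => lti; rewrite (nth_map 0) //; exact: fibre_idem.
apply: funext => t; rewrite big_map /fibre.
rewrite (bigD1_seq (a t)) ?mem_undup ?undup_uniq //= eqxx mul1r.
by rewrite big1 ?addr0 // => v; rewrite eq_sym => /negbTE ->; rewrite mul0r.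
Qed.

Lemma AsetE : @Aset K = finval.
Proof.
by apply: funext => a; apply: propext; split; [exact: Aset_finval|exact: finval_Aset].
Qed.

Lemma finval_cst c : finval (fcst c).
Proof. by exists [:: c] => t; rewrite inE. Qed.

Lemma finval_add a b : finval a -> finval b -> finval (fadd a b).
Proof.
by case=> La Ha [Lb Hb]; exists [seq x + y | x <- La, y <- Lb] => t; exact: allpairs_f.
Qed.

Lemma finval_mul a b : finval a -> finval b -> finval (fmul a b).
Proof.
by case=> La Ha [Lb Hb]; exists [seq x * y | x <- La, y <- Lb] => t; exact: allpairs_f.
Qed.

Lemma finval_opp a : finval a -> finval (fopp a).
Proof. by case=> L HL; exists [seq - x | x <- L] => t; exact: map_f. Qed.

Lemma finval_inv a : finval a -> finval (fun t => (a t)^-1).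
Proof. by case=> L HL; exists [seq x^-1 | x <- L] => t; exact: map_f. Qed.

Lemma finval_indicator (P : K -> bool) : finval (fun t => if P t then 1 else 0).
Proof. by exists [:: 1; 0] => t; case: (P t); rewrite !inE eqxx ?orbT. Qed.

Lemma subring_finval : subring finval.
Proof.
do ![split; first by [exact: finval_cst|exact: finval_add|exact: finval_opp]].
exact: finval_mul.
Qed.

(* The pointwise inverse (with 0^-1 = 0) is a von Neumann quasi-inverse. *)
Lemma vN_regular_finval : vN_regular finval.
Proof.
move=> a Ha; exists (fun t => (a t)^-1); split; first exact: finval_inv.
apply: funext => t; rewrite /fmul.
by have [->|nz] := eqVneq (a t) 0; rewrite ?mul0r // -mulrA mulfV ?mulr1.
Qed.

(* The annihilator of X is generated by the indicator of the common zero
   set of X. *)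
Lemma baer_finval : baer finval.
Proof.
move=> X _.
pose e : RK K := fun t => if `[< forall x, X x -> x t = 0 >] then 1 else 0.
exists e; split; first exact: finval_indicator.
split; first by apply: funext => t; rewrite /fmul /e; case: asboolP; rewrite ?mulr0 ?mulr1.
move=> a Ha; split => [annX | [b [_ ->]] x Xx].
  exists a; split => //; apply: funext => t; rewrite /fmul /e.
  case: asboolP => [_|not_zero]; first by rewrite mul1r.
  rewrite mul0r; apply: contra_notP not_zero => /eqP at_nz x Xx.
  have /eqP := congr1 (fun f => f t) (annX x Xx).
  by rewrite /fmul mulf_eq0 (negbTE at_nz) => /eqP.
apply: funext => t; rewrite /fmul /e /fzero /fcst.
by case: asboolP => [zero_set|_]; rewrite ?(zero_set x Xx) ?mulr0 ?mul0r.
Qed.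

Definition delta t c : RK K := fun u => if u == t then c else 0.

Lemma finval_delta t c : finval (delta t c).
Proof. by exists [:: c; 0] => u; rewrite /delta; case: (u == t); rewrite !inE eqxx ?orbT. Qed.

Lemma fmul_delta a t c : fmul a (delta t c) = delta t (a t * c).
Proof. by apply: funext => u; rewrite /fmul /delta; case: eqP => [->|]; rewrite ?mulr0. Qed.

Lemma delta_mul t c d : fmul (delta t c) (delta t d) = delta t (c * d).
Proof. by rewrite fmul_delta /delta eqxx. Qed.

Lemma delta_add t c d : fadd (delta t c) (delta t d) = delta t (c + d).
Proof. by apply: funext => u; rewrite /fadd /delta; case: eqP; rewrite ?addr0. Qed.

Lemma delta_eq0 t c : (delta t c = @fzero K) <-> c = 0.
Proof.
split; first by move/(congr1 (fun f => f t)); rewrite /delta eqxx.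
by move=> ->; apply: funext => u; rewrite /delta /fzero /fcst; case: eqP.
Qed.

(* R is a rational extension of A: if s(t) != 0, the point mass at t
   brings any r into A without killing s. *)
Lemma rational_in_R_finval : rational_in_R finval.
Proof.
move=> r s s_nz.
have [t st_nz] : exists t, s t != 0.
  apply: contra_notP s_nz => no_t; apply: funext => t.
  by apply: contra_notP no_t => /eqP st_nz; exists t.
exists (delta t 1); rewrite !fmul_delta; split; first exact: finval_delta.
split; first exact: finval_delta.
by move/delta_eq0/eqP; rewrite mulr1 (negbTE st_nz).
Qed.

End FinitelyValued.

Section EmbedRationalExtension.
Variables (K : fieldType) (S : comNzRingType) (j : RK K -> S).
Hypothesis j_rat : rational_ext_of (@finval K) j.

Let jD : forall a b, finval a -> finval b -> j (fadd a b) = j a + j b.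
Proof. by case: j_rat => [[_ []]]. Qed.
Let jM : forall a b, finval a -> finval b -> j (fmul a b) = j a * j b.
Proof. by case: j_rat => [[_ [_ []]]]. Qed.
Let j_inj : forall a b, finval a -> finval b -> j a = j b -> a = b.
Proof. by case: j_rat => [[_ [_ []]]]. Qed.

Lemma j0 : j (@fzero K) = 0.
Proof.
have := jD (finval_cst 0) (finval_cst 0).
have -> : fadd (@fzero K) (@fzero K) = @fzero K by apply: funext => u; rewrite /fadd addr0.
by move/(congr1 (fun y => y - j (@fzero K))); rewrite subrr addrK.
Qed.

Lemma j_delta_eq0 t c : j (delta t c) = 0 -> c = 0.
Proof.
rewrite -j0 => /j_inj jE; apply/delta_eq0.
by apply: jE; [exact: finval_delta|exact: finval_cst].
Qed.

Lemma exists_coord (y : S) t : exists c, y * j (delta t 1) = j (delta t c).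
Proof.
have dt_nz : j (delta t 1) != 0 by apply/eqP => /j_delta_eq0 /eqP; rewrite oner_eq0.
have [a [Ha [[b [Hb Eb]] nz]]] := j_rat.2 y _ dt_nz.
have at_nz : a t != 0.
  apply: contraNneq nz => at0.
  by rewrite mulrC -(jM Ha (finval_delta t 1)) fmul_delta at0 mul0r (delta_eq0 t 0).2 ?j0.
have Ea : fmul a (delta t (a t)^-1) = delta t 1 by rewrite fmul_delta mulfV.
exists (b t * (a t)^-1).
by rewrite -Ea (jM Ha (finval_delta _ _)) mulrA Eb -(jM Hb (finval_delta _ _)) fmul_delta.
Qed.

Definition coord (y : S) : RK K := fun t => sval (cid (exists_coord y t)).

Lemma coordP y t : y * j (delta t 1) = j (delta t (coord y t)).
Proof. exact: svalP (cid (exists_coord y t)). Qed.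

Lemma coord_unique y t c : y * j (delta t 1) = j (delta t c) -> coord y t = c.
Proof.
rewrite coordP => /j_inj jE.
move: (jE (finval_delta _ _) (finval_delta _ _)) => /(congr1 (fun f => f t)).
by rewrite /delta eqxx.
Qed.

Lemma coord1 : coord 1 = @fone K.
Proof. by apply: funext => t; apply: coord_unique; rewrite mul1r. Qed.

Lemma coordD x y : coord (x + y) = fadd (coord x) (coord y).
Proof.
apply: funext => t; apply: coord_unique.
by rewrite mulrDl !coordP -(jD (finval_delta _ _) (finval_delta _ _)) delta_add.
Qed.

Lemma coordM x y : coord (x * y) = fmul (coord x) (coord y).
Proof.
apply: funext => t; apply: coord_unique.
have delta_t1 c : j (delta t c) = j (delta t 1) * j (delta t c).
  by rewrite -(jM (finval_delta _ _) (finval_delta _ _)) delta_mul mul1r.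
rewrite -mulrA coordP delta_t1 mulrA coordP.
by rewrite -(jM (finval_delta _ _) (finval_delta _ _)) delta_mul.
Qed.

Lemma coord_j a : finval a -> coord (j a) = a.
Proof.
move=> Ha; apply: funext => t; apply: coord_unique.
by rewrite -(jM Ha (finval_delta t 1)) fmul_delta mulr1.
Qed.

(* If x has all coordinates 0 then x kills every point mass; rationality
   then forces x = 0. *)
Lemma coord_inj : injective coord.
Proof.
move=> x y exy; apply/eqP; rewrite -subr_eq0; apply/negPn/negP => nz.
have kill t : (x - y) * j (delta t 1) = 0 by rewrite mulrBl !coordP exy subrr.
have [a [Ha [[b [Hb Eb]] nz_ab]]] := j_rat.2 (x - y) _ nz.
apply: (negP nz_ab); rewrite Eb.
suff -> : b = @fzero K by rewrite j0.
apply: funext => t; apply: (@j_delta_eq0 t).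
rewrite -[b t]mulr1 -fmul_delta (jM Hb (finval_delta t 1)) -Eb.
by rewrite mulrAC kill mul0r.
Qed.

End EmbedRationalExtension.

Lemma R_is_Q_finval (K : fieldType) : R_is_Q (@finval K).
Proof.
split; first exact: rational_in_R_finval.
move=> S j j_rat; exists (coord j_rat); split; first exact: coord1.
split; first exact: coordD. split; first exact: coordM.
split; first exact: coord_inj. exact: coord_j.
Qed.

Section RealField.
Variable K : fieldType.
Hypothesis hK : real_field K.

(* A real field has characteristic 0: (n+1) * 1 = 0 would write -1 as a
   sum of n squares of 1. *)
Lemma real_natr_neq0 n : n.+1%:R != 0 :> K.
Proof.
apply/eqP => n1_0; apply: (hK (s := nseq n 1)).
rewrite big_nseq expr1n iter_addr addr0; apply/eqP; rewrite -addr_eq0.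
by rewrite -{2}(mulr1n (1 : K)) -mulrnDr addn1 n1_0.
Qed.

Lemma real_natr_inj : injective (fun n : nat => n%:R : K).
Proof.
move=> m n; wlog lemn : m n / (m <= n)%N => [wlogH|mn].
  by case: (leqP m n) => [|/ltnW] h e; [exact: wlogH | symmetry; apply: wlogH].
apply/eqP; rewrite eqn_leq lemn /=; apply: contraT; rewrite -ltnNge => ltnm.
have := real_natr_neq0 (n - m).-1.
by rewrite prednK ?subn_gt0 // natrB ?mn ?subrr ?eqxx.
Qed.

Lemma not_finval_id : ~ finval (fun t : K => t).
Proof.
case=> L HL.
have U : uniq [seq (i%:R : K) | i <- iota 0 (size L).+1].
  by rewrite map_inj_uniq ?iota_uniq //; exact: real_natr_inj.
by have := uniq_leq_size U (fun x _ => HL x); rewrite size_map size_iota ltnn.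
Qed.

(* R with the identity embedding is a rational extension of A which A
   does not exhaust. *)
Lemma not_rationally_complete_finval : ~ rationally_complete (@finval K).
Proof.
move=> complete.
have R_rat : rational_ext_of (@finval K) (id : RK K -> RK K).
  split; first by do !split.
  move=> r s /eqP s_nz; have [a [Ha [Hra nz]]] := rational_in_R_finval r s_nz.
  by exists a; split => //; split; [exists (fmul r a) | apply/eqP].
have [a [Ha Ea]] := complete _ _ R_rat (fun t : K => t).
by apply: not_finval_id; rewrite -Ea.
Qed.

End RealField.

Theorem mainTheorem10 (K : fieldType) (hK : real_field K) :
  subring (@Aset K) /\ vN_regular (@Aset K) /\ baer (@Aset K) /\
  (exists r : RK K, ~ Aset r) /\
  R_is_Q (@Aset K) /\
  ~ rationally_complete (@Aset K).
Proof.
rewrite AsetE.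
split; first exact: subring_finval.
split; first exact: vN_regular_finval.
split; first exact: baer_finval.
split; first by exists (fun t => t); exact: not_finval_id.
split; first exact: R_is_Q_finval.
exact: not_rationally_complete_finval.
Qed.
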